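(* Let $X$ be a finite set and let $S: X\times X\to X\times X$, $S(x,y)=(g_x(y),f_y(x))$, be a non-degenerate symmetric set-theoretical solution of the quantum Yang–Baxter equation which is not the trivial solution. Let $G(X,S)=\langle X \mid xy=g_x(y)f_y(x),\ x,y\in X\rangle$ be its structure group. Then $G(X,S)$ is not bi-orderable. Furthermore, $G(X,S)$ has generalized torsion elements.
   Context: A set-theoretical solution is a pair $(X,S)$ with $S:X\times X\to X\times X$ a bijection written $S(x,y)=(g_x(y),f_y(x))$ for functions $f_x,g_x:X\to X$. It is non-degenerate if all $f_x,g_x$ are bijections; involutive if $S\circ S=\mathrm{Id}$; braided if $S^{12}S^{23}S^{12}=S^{23}S^{12}S^{23}$ on $X^3$ (where $S^{i,i+1}$ acts on the $i$-th and $(i+1)$-th components); symmetric if involutive and braided. The solution is trivial if $f_x=g_x=\mathrm{Id}_X$ for all $x\in X$. A group is bi-orderable if it admits a strict total order invariant under both left and right multiplication. An element $g\neq 1$ of a group $G$ is a generalized torsion element if there exist $h_1,\dots,h_n\in G$ with $\prod_{i=1}^n h_igh_i^{-1}=1$. *)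

From mathcomp Require Import all_boot.
Set Implicit Arguments. Unset Strict Implicit. Unset Printing Implicit Defensive.

Record Grp := {
  gcar :> Type;
  gmul : gcar -> gcar -> gcar;
  gone : gcar;
  ginv : gcar -> gcar;
  gmulA : forall a b c, gmul a (gmul b c) = gmul (gmul a b) c;
  gmul1l : forall a, gmul gone a = a;
  gmul1r : forall a, gmul a gone = a;
  gmulVl : forall a, gmul (ginv a) a = gone;
  gmulVr : forall a, gmul a (ginv a) = gone
}.

Definition is_hom (G H : Grp) (phi : G -> H) : Prop :=
  forall a b, phi (gmul a b) = gmul (phi a) (phi b).

Section Solutions.
Variable X : finType.
Variables f g : X -> X -> X.  (* f x = f_x, g x = g_x *)

Definition solS (p : X * X) : X * X := (g p.1 p.2, f p.2 p.1).

Definition S12 (t : X * X * X) : X * X * X :=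
  let '(x, y, z) := t in let '(a, b) := solS (x, y) in (a, b, z).
Definition S23 (t : X * X * X) : X * X * X :=
  let '(x, y, z) := t in let '(b, c) := solS (y, z) in (x, b, c).

Definition sol_bijective : Prop := bijective solS.
Definition non_degenerate : Prop :=
  forall x, bijective (f x) /\ bijective (g x).
Definition involutive_sol : Prop := forall p, solS (solS p) = p.
Definition braided : Prop :=
  forall t, S12 (S23 (S12 t)) = S23 (S12 (S23 t)).
Definition symmetric_sol : Prop := involutive_sol /\ braided.
Definition trivial_sol : Prop := forall x y, f x y = y /\ g x y = y.

Definition satisfies_rel (H : Grp) (j : X -> H) : Prop :=
  forall x y, gmul (j x) (j y) = gmul (j (g x y)) (j (f y x)).

(** (G, iota) is the structure group  <X | xy = g_x(y) f_y(x)>,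
    characterized by the universal property of the presentation. *)
Definition is_structure_group (G : Grp) (iota : X -> G) : Prop :=
  satisfies_rel iota /\
  forall (H : Grp) (j : X -> H), satisfies_rel j ->
    (exists phi : G -> H, is_hom phi /\ forall x, phi (iota x) = j x) /\
    (forall phi psi : G -> H, is_hom phi -> is_hom psi ->
       (forall x, phi (iota x) = psi (iota x)) -> forall a, phi a = psi a).
End Solutions.

Definition bi_orderable (G : Grp) : Prop :=
  exists lt : G -> G -> Prop,
    (forall a, ~ lt a a) /\
    (forall a b c, lt a b -> lt b c -> lt a c) /\
    (forall a b, a <> b -> lt a b \/ lt b a) /\
    (forall a b c, lt a b -> lt (gmul c a) (gmul c b)) /\
    (forall a b c, lt a b -> lt (gmul a c) (gmul b c)).

Definition conj_prod (G : Grp) (x : G) (hs : seq G) : G :=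
  foldr (fun h acc => gmul (gmul (gmul h x) (ginv h)) acc) (gone G) hs.

Definition generalized_torsion (G : Grp) (x : G) : Prop :=
  x <> gone G /\ exists hs : seq G, hs <> [::] /\ conj_prod x hs = gone G.

(** Send the structure group G to Z^X ⋊ Sym(X), x ↦ (e_x, g_x).  By the
    braid relation, any two positive words of equal length whose images in
    Z^X agree are already equal in G, so positive words can be manipulated
    through their vectors in Z^X alone.  Since Sym(X) is finite, some
    positive word u has vector d·e_y (d > 0) and trivial permutation part;
    non-triviality of S lets us take y moved by some g_x.  Then u commutes
    with a^m, where a is the generator x and m the order of g_x, but not with
    a itself, since u a and a u have different vectors at y.  Hence the
    commutator c = u a u⁻¹ a⁻¹ is non-trivial, while the conjugates
    a^k c a^-k (k < m) telescope to u a^m u⁻¹ a^-m = 1: c is a generalized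
    torsion element, and no bi-ordering can make a product of conjugates of
    a positive (or negative) element equal to 1. *)
From mathcomp Require Import all_boot all_fingroup all_algebra zify.
Set Implicit Arguments. Unset Strict Implicit. Unset Printing Implicit Defensive.

Import GRing.Theory.

Section GroupFacts.
Variable G : Grp.
Implicit Types a b u x : G.
Local Notation "a ** b" := (gmul a b) (at level 40, left associativity).

Lemma gmulK a b : a ** b ** ginv b = a.
Proof. by rewrite -gmulA gmulVr gmul1r. Qed.

Lemma gmulKV a b : a ** ginv b ** b = a.
Proof. by rewrite -gmulA gmulVl gmul1r. Qed.

Lemma ginv_unique a b : a ** b = gone G -> ginv a = b.
Proof. by move=> ab1; rewrite -[b]gmul1l -(gmulVl a) -gmulA ab1 gmul1r. Qed.

Lemma ginvM a b : ginv (a ** b) = ginv b ** ginv a.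
Proof. by apply: ginv_unique; rewrite -gmulA (gmulA b) gmulVr gmul1l gmulVr. Qed.

Lemma ginvK a : ginv (ginv a) = a.
Proof. by apply: ginv_unique; rewrite gmulVl. Qed.

Lemma ginv1 : ginv (gone G) = gone G.
Proof. by apply: ginv_unique; rewrite gmul1l. Qed.

Lemma gidem_eq1 a : a ** a = a -> a = gone G.
Proof. by move=> aa; rewrite -(gmulK a a) aa gmulVr. Qed.

Fixpoint gpow x k : G := if k is k'.+1 then x ** gpow x k' else gone G.

Lemma gpowSr x k : gpow x k.+1 = gpow x k ** x.
Proof.
elim: k => [|k IHk]; first by rewrite /= gmul1l gmul1r.
by rewrite -[gpow x k.+2]/(x ** gpow x k.+1) {1}IHk gmulA.
Qed.

Definition gcomm a b : G := a ** b ** ginv a ** ginv b.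

Lemma gcomm_eq1 a b : gcomm a b = gone G -> a ** b = b ** a.
Proof. by move=> ab1; rewrite -[b ** a]gmul1l -ab1 /gcomm gmulA !gmulKV. Qed.

Lemma conj_prod_gcomm_pow u x m :
  gpow x m ** u = u ** gpow x m ->
  conj_prod (gcomm u x) [seq gpow x k | k <- iota 0 m] = gone G.
Proof.
move=> xm_u.
pose uconj k := gpow x k ** u ** ginv (gpow x k).
have conjS k :
    gpow x k ** gcomm u x ** ginv (gpow x k) = uconj k ** ginv (uconj k.+1).
  by rewrite /uconj gpowSr /gcomm !ginvM !ginvK !gmulA !gmulKV.
have telescope n k :
    conj_prod (gcomm u x) [seq gpow x i | i <- iota k n]
    = uconj k ** ginv (uconj (k + n)).
  elim: n k => [|n IHn] k /=; first by rewrite addn0 gmulVr.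
  by rewrite IHn conjS addSnnS -gmulA (gmulA (ginv _)) gmulVl gmul1l.
by rewrite telescope add0n /uconj /= ginv1 gmul1l gmul1r xm_u gmulK gmulVr.
Qed.

Lemma conj_prod_cone (R : G -> G -> Prop) (c : G) hs :
  (forall a b d, R a b -> R b d -> R a d) ->
  (forall a b d, R a b -> R (d ** a) (d ** b)) ->
  (forall a b d, R a b -> R (a ** d) (b ** d)) ->
  R (gone G) c -> hs <> [::] -> R (gone G) (conj_prod c hs).
Proof.
move=> R_trans R_mull R_mulr c_pos.
have conj_pos h : R (gone G) (h ** c ** ginv h).
  by have := R_mulr _ _ (ginv h) (R_mull _ _ h c_pos); rewrite gmul1r gmulVr.
elim: hs => [//|h hs IHhs] _ /=.
case: hs IHhs => [|h' hs] IHhs; first by rewrite /= gmul1r.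
apply: R_trans (conj_pos h) _.
have /(R_mull _ _ (h ** c ** ginv h)) : R (gone G) (conj_prod c (h' :: hs)).
  by apply: IHhs.
by rewrite gmul1r.
Qed.

Lemma generalized_torsion_not_bi_orderable (c : G) :
  generalized_torsion c -> ~ bi_orderable G.
Proof.
move=> [c_neq1 [hs [hs_neq0 prod1]]].
move=> [lt [lt_irr [lt_trans [lt_total [lt_mull lt_mulr]]]]].
have [c_pos|c_neg] := lt_total _ _ (nesym c_neq1).
  by apply: (lt_irr (gone G)); rewrite -{2}prod1; exact: conj_prod_cone.
apply: (lt_irr (gone G)); rewrite -{1}prod1.
apply: (@conj_prod_cone (fun a b => lt b a)) => // a b d.
- by move=> ab bd; exact: lt_trans bd ab.
- exact: lt_mull.
- exact: lt_mulr.
Qed.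
End GroupFacts.

Lemma hom1 (G H : Grp) (phi : G -> H) : is_hom phi -> phi (gone G) = gone H.
Proof. by move=> phi_hom; apply: gidem_eq1; rewrite -phi_hom gmul1l. Qed.

Section SemidirectProduct.
Variable X : finType.

Definition sdprod_type := ({ffun X -> int} * {perm X})%type.
Implicit Types p q r : sdprod_type.

Definition vact (s : {perm X}) (v : {ffun X -> int}) : {ffun X -> int} :=
  [ffun z => v ((s^-1)%g z)].

(* Permutations compose left to right, ((s * t) z = t (s z)), whence [q.2 * p.2]. *)
Definition sdmul p q : sdprod_type :=
  ([ffun z => (p.1 z + vact p.2 q.1 z)%R], (q.2 * p.2)%g).
Definition sdone : sdprod_type := ([ffun _ => 0%R], 1%g).
Definition sdinv p : sdprod_type :=
  ([ffun z => (- vact (p.2^-1)%g p.1 z)%R], (p.2^-1)%g).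

Lemma sdmulA p q r : sdmul p (sdmul q r) = sdmul (sdmul p q) r.
Proof.
case: p q r => [p1 p2] [q1 q2] [r1 r2]; rewrite /sdmul /=.
congr pair; last by rewrite mulgA.
by apply/ffunP=> z; rewrite !ffunE /= addrA invMg permM.
Qed.

Lemma sdmul1l p : sdmul sdone p = p.
Proof.
case: p => p1 p2; rewrite /sdmul /=; congr pair; last by rewrite mulg1.
by apply/ffunP=> z; rewrite !ffunE invg1 perm1 add0r.
Qed.

Lemma sdmul1r p : sdmul p sdone = p.
Proof.
case: p => p1 p2; rewrite /sdmul /=; congr pair; last by rewrite mul1g.
by apply/ffunP=> z; rewrite !ffunE addr0.
Qed.

Lemma sdmulVl p : sdmul (sdinv p) p = sdone.
Proof.
case: p => p1 p2; rewrite /sdmul /=; congr pair; last by rewrite mulgV.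
by apply/ffunP=> z; rewrite !ffunE addNr.
Qed.

Lemma sdmulVr p : sdmul p (sdinv p) = sdone.
Proof.
case: p => p1 p2; rewrite /sdmul /=; congr pair; last by rewrite mulVg.
by apply/ffunP=> z; rewrite !ffunE invgK -permM mulVg perm1 subrr.
Qed.

Definition sdprod_grp : Grp :=
  Build_Grp sdmulA sdmul1l sdmul1r sdmulVl sdmulVr.
End SemidirectProduct.

Lemma permV_eq (T : finType) (s : {perm T}) z y : ((s^-1)%g z == y) = (z == s y).
Proof. by rewrite -(inj_eq (@perm_inj _ s)) permKV. Qed.

Lemma nat_pigeonhole (T : finType) (F : nat -> T) : exists i j, i < j /\ F i = F j.
Proof.
pose F' (k : 'I_#|T|.+1) := F k.
have [[i j] /= /andP[ij /eqP Fij]|no_pair] :=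
  pickP (fun p : 'I_#|T|.+1 * 'I_#|T|.+1 => (p.1 < p.2) && (F' p.1 == F' p.2)).
  by exists i, j.
have F'_inj : injective F'.
  move=> i j Fij; case: (ltngtP i j) => [ij|ji|/val_inj //].
    by have := no_pair (i, j); rewrite /= ij Fij eqxx.
  by have := no_pair (j, i); rewrite /= ji Fij eqxx.
by have := leq_card F' F'_inj; rewrite card_ord ltnn.
Qed.

Section Solution.
Variable X : finType.
Variables f g : X -> X -> X.
Hypothesis g_inj : forall x, injective (g x).
Hypothesis S_invol : involutive_sol f g.
Hypothesis S_braided : braided f g.

Lemma g_invol x y : g (g x y) (f y x) = x.
Proof. exact: (congr1 fst (S_invol (x, y))). Qed.

Lemma g_braid x y z : g x (g y z) = g (g x y) (g (f y x) z).
Proof. exact: esym (congr1 (fun t => t.1.1) (S_braided (x, y, z))). Qed.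

Lemma exists_moved : ~ trivial_sol f g -> exists x y, g x y != y.
Proof.
move=> nontrivial.
have [[x y] /= gxy|g_id] := pickP (fun p : X * X => g p.1 p.2 != p.2).
  by exists x, y.
have gE x y : g x y = y by apply/eqP/negbFE; exact: (g_id (x, y)).
by case: nontrivial => x y; split; [have := g_invol y x; rewrite !gE | exact: gE].
Qed.

Definition gperm x : {perm X} := perm (@g_inj x).

Lemma gpermE x y : gperm x y = g x y.
Proof. by rewrite permE. Qed.

Lemma gperm_braid x y : (gperm (f y x) * gperm (g x y))%g = (gperm y * gperm x)%g.
Proof. by apply/permP => z; rewrite !permM !gpermE (g_braid x y z). Qed.

Fixpoint word_perm (w : seq X) : {perm X} :=
  if w is x :: w' then (word_perm w' * gperm x)%g else 1%g.

(* The Z^X-component of the image of a word in Z^X ⋊ Sym(X). *)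
Fixpoint word_vec (w : seq X) : X -> nat :=
  if w is x :: w' then fun z => (z == x) + word_vec w' ((gperm x)^-1%g z)
  else fun _ => 0.

Lemma word_perm_cat w1 w2 : word_perm (w1 ++ w2) = (word_perm w2 * word_perm w1)%g.
Proof. by elim: w1 => [|x w1 IHw] /=; rewrite ?mulg1 // IHw mulgA. Qed.

Lemma word_perm_nseq x k : word_perm (nseq k x) = (gperm x ^+ k)%g.
Proof. by elim: k => [|k IHk] //=; rewrite IHk expgSr. Qed.

Lemma word_perm_fix y : (forall x, gperm x y = y) -> forall w, word_perm w y = y.
Proof. by move=> y_fix; elim=> [|x w IHw] /=; rewrite ?perm1 // permM IHw y_fix. Qed.

Lemma word_vec_cat w1 w2 z :
  word_vec (w1 ++ w2) z = word_vec w1 z + word_vec w2 ((word_perm w1)^-1%g z).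
Proof.
elim: w1 z => [|x w1 IHw] z /=; first by rewrite invg1 perm1.
by rewrite IHw addnA invMg permM.
Qed.

Lemma word_vec_rel x y w : word_vec [:: x, y & w] =1 word_vec [:: g x y, f y x & w].
Proof.
move=> z; rewrite /= !permV_eq !gpermE g_invol addnA [(z == x) + _]addnC -addnA.
congr (_ + (_ + _)).
have := congr1 (fun s : {perm X} => (s^-1)%g z) (gperm_braid x y).
by rewrite /= !invMg !permM => ->.
Qed.

(* [mult_word y k] has vector k·e_y: each letter is chosen to land on y. *)
Fixpoint mult_word (y : X) (k : nat) : seq X :=
  if k is k'.+1 then mult_word y k' ++ [:: ((word_perm (mult_word y k'))^-1)%g y]
  else [::].

Lemma word_vec_mult_word y k z : word_vec (mult_word y k) z = k * (z == y).
Proof.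
elim: k => //= k IHk.
by rewrite word_vec_cat IHk /= permV_eq permKV addn0 mulSn addnC.
Qed.

Lemma mult_word_add y i d :
  mult_word y (i + d) =
  mult_word y i ++ mult_word ((word_perm (mult_word y i))^-1%g y) d.
Proof.
elim: d => [|d IHd] /=; first by rewrite addn0 cats0.
by rewrite addnS /= IHd -catA word_perm_cat invMg permM.
Qed.

Lemma exists_perm_trivial_mult_word : ~ trivial_sol f g ->
  exists y d x, [/\ 0 < d, word_perm (mult_word y d) = 1%g & g x y != y].
Proof.
move=> nontrivial; have [x0 [y0 moved]] := exists_moved nontrivial.
have [i [j [ij perm_ij]]] := nat_pigeonhole (fun k => word_perm (mult_word y0 k)).
pose rho := word_perm (mult_word y0 i).
exists ((rho^-1)%g y0), (j - i).
have W_perm : word_perm (mult_word ((rho^-1)%g y0) (j - i)) = 1%g.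
  have jE : j = i + (j - i) by rewrite subnKC // ltnW.
  rewrite jE mult_word_add word_perm_cat -/rho in perm_ij.
  by apply: (mulIg rho); rewrite mul1g -perm_ij.
have [x x_moves | all_fix] := pickP (fun x => gperm x ((rho^-1)%g y0) != (rho^-1)%g y0).
  by exists x; rewrite -gpermE subn_gt0.
have y_fix x : gperm x ((rho^-1)%g y0) = (rho^-1)%g y0 by apply/eqP/negbFE/all_fix.
have := word_perm_fix y_fix (mult_word y0 i); rewrite -/rho permKV => y0E.
by move: moved; rewrite y0E -gpermE y_fix eqxx.
Qed.

Section WordProducts.
Variables (G : Grp) (gen : X -> G).
Hypothesis gen_rel : satisfies_rel f g gen.

Definition wprod (w : seq X) : G := foldr (fun x acc => gmul (gen x) acc) (gone G) w.

Lemma wprod_cat w1 w2 : wprod (w1 ++ w2) = gmul (wprod w1) (wprod w2).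
Proof. by elim: w1 => [|x w1 IHw] /=; rewrite ?gmul1l // -gmulA -IHw. Qed.

Lemma wprod_nseq x k : wprod (nseq k x) = gpow (gen x) k.
Proof. by elim: k => //= k ->. Qed.

Lemma wprod_front w z : 0 < word_vec w z ->
  exists w', [/\ size w' = (size w).-1, word_vec (z :: w') =1 word_vec w
               & wprod (z :: w') = wprod w].
Proof.
elim: w z => [|x w IHw] z //=.
have [->|_] := eqVneq z x; first by exists w.
rewrite add0n; set z' := ((gperm x)^-1)%g z => z'_in.
have [w' [size_w' vec_w' prod_w']] := IHw _ z'_in.
have gz' : g x z' = z by rewrite -gpermE permKV.
exists (f z' x :: w'); split.
- by rewrite /= size_w'; case: (w) z'_in.
- move=> t; rewrite -gz'.
  change (word_vec [:: g x z', f z' x & w'] t = word_vec (x :: w) t).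
  rewrite -word_vec_rel.
  by rewrite [RHS]/= -vec_w'.
- by rewrite /= -prod_w' /= gmulA -gz' -gen_rel -gmulA.
Qed.

Lemma wprod_eq_of_word_vec w w' : size w = size w' ->
  word_vec w =1 word_vec w' -> wprod w = wprod w'.
Proof.
elim: w' w => [|y w' IHw] [|x w] //= [size_ww'] vec_ww'.
have /wprod_front [w'' [size_w'' vec_w'' prod_w'']] : 0 < word_vec (x :: w) y.
  by rewrite /= (vec_ww' y) eqxx.
rewrite -[gmul (gen x) _]/(wprod (x :: w)) -prod_w'' /=; congr gmul.
apply: IHw; first by rewrite size_w'' /= size_ww'.
by move=> t; move: (vec_w'' (gperm y t)); rewrite /= vec_ww' !permK => /addnI.
Qed.
End WordProducts.

Definition sdgen (x : X) : sdprod_grp X := ([ffun z => Posz (z == x)], gperm x).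

Lemma sdgen_rel : satisfies_rel f g sdgen.
Proof.
move=> x y; rewrite /sdgen /= /sdmul /=; congr pair; last by rewrite gperm_braid.
by apply/ffunP=> z; rewrite !ffunE /= !permV_eq !gpermE g_invol addrC.
Qed.

Lemma structure_group_word_vec (G : Grp) (gen : X -> G) :
  is_structure_group f g gen -> forall w w',
  wprod gen w = wprod gen w' -> word_vec w =1 word_vec w'.
Proof.
move=> [_ univ] w w' ww' z.
have [phi [phi_hom phi_gen]] := (univ _ _ sdgen_rel).1.
have phi_wprod v : phi (wprod gen v) = ([ffun t => Posz (word_vec v t)], word_perm v).
  elim: v => [|x v IHv] /=.
    by rewrite hom1 //; congr pair; apply/ffunP=> t; rewrite ffunE.
  rewrite phi_hom phi_gen IHv /= /sdmul /=; congr pair.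
  by apply/ffunP=> t; rewrite !ffunE PoszD.
have := congr1 (fun p : sdprod_type X => p.1 z) (congr1 phi ww').
by rewrite /= !phi_wprod /= !ffunE => [[]].
Qed.

Lemma structure_group_generalized_torsion (G : Grp) (gen : X -> G) :
  ~ trivial_sol f g -> is_structure_group f g gen ->
  exists c : G, generalized_torsion c.
Proof.
move=> nontrivial gen_str; have gen_rel := gen_str.1.
have [y [d [x [d_gt0 W_perm gxy]]]] := exists_perm_trivial_mult_word nontrivial.
set W := mult_word y d in W_perm; pose u := wprod gen W; pose m := #[gperm x]%g.
have xm_u : gmul (gpow (gen x) m) u = gmul u (gpow (gen x) m).
  rewrite -wprod_nseq -!wprod_cat; apply: wprod_eq_of_word_vec => //.
    by rewrite !size_cat addnC.
  move=> t; rewrite !word_vec_cat word_perm_nseq expg_order W_perm.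
  by rewrite !invg1 !perm1 addnC.
exists (gcomm u (gen x)); split.
  move/gcomm_eq1 => ux.
  have /(structure_group_word_vec gen_str) /(_ y) :
      wprod gen (W ++ [:: x]) = wprod gen (x :: W).
    by rewrite wprod_cat /= gmul1r ux.
  rewrite word_vec_cat W_perm invg1 perm1 /= !word_vec_mult_word eqxx permV_eq gpermE.
  by rewrite [y == g x y]eq_sym (negbTE gxy) muln0; lia.
exists [seq gpow (gen x) k | k <- iota 0 m]; split; last exact: conj_prod_gcomm_pow.
by rewrite /m; case: #[_]%g (order_gt0 (gperm x)).
Qed.
End Solution.

Theorem theorem1 (X : finType) (f g : X -> X -> X) :
  sol_bijective f g ->
  non_degenerate f g ->
  symmetric_sol f g ->
  ~ trivial_sol f g ->
  forall (G : Grp) (iota : X -> G), is_structure_group f g iota ->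
    ~ bi_orderable G /\ exists x : G, generalized_torsion x.
Proof.
move=> _ nondeg [S_invol S_braided] nontrivial G iota iota_str.
have g_inj x : injective (g x) by apply: bij_inj; exact: (nondeg x).2.
have [c c_torsion] :=
  structure_group_generalized_torsion g_inj S_invol S_braided nontrivial iota_str.
by split; [exact: generalized_torsion_not_bi_orderable c_torsion | exists c].
Qed.
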